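(* Let $l,T\in\mathbb{N}$, let $\widehat{Q}:=(-\frac{1}{4},\ldots,-\frac{1}{4})+[-T,2T]^{l}\subseteq\mathbb{R}^l$, and let $\phi\colon\mathbb{Z}^{l}\to\mathbb{Z}^{l}$ be a permutation such that $\|\phi(x)-x\|\leq T$ for all $x\in\mathbb{Z}^{l}$. Then there exist permutations $\sigma_{1},\sigma_{2},\ldots,\sigma_{3^{l}}\colon \frac{1}{2}\mathbb{Z}^{l}\to\frac{1}{2}\mathbb{Z}^{l}$ such that (i) for each $k\in \{1,\dots,3^{l}\}$ there exists $p_{k}\in\{-1,0,1\}^{l}$ such that for every $z\in \mathbb{Z}^{l}$ the restriction of $\sigma_{k}$ to $\frac{1}{2}\mathbb{Z}^{l}\cap(\widehat{Q}+T(3z+p_{k}))$ is a permutation of $\frac{1}{2}\mathbb{Z}^{l}\cap (\widehat{Q}+T(3z+p_{k}))$; (ii) $\phi=(\sigma_{3^{l}}\circ \sigma_{3^{l}-1}\circ \cdots\circ \sigma_{1})|_{\mathbb{Z}^{l}}$.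
   Context: $\|\cdot\|$ is the Euclidean norm. *)

From HB Require Import structures.
From mathcomp Require Import all_boot all_order all_algebra.
Set Implicit Arguments. Unset Strict Implicit. Unset Printing Implicit Defensive.
Import Order.TTheory GRing.Theory Num.Theory.
Local Open Scope ring_scope.

(* Points of Z^l are row vectors 'rV[int]_l.
   Points of (1/2)Z^l are ENCODED by their doubles: y : 'rV[int]_l stands
   for the point y/2 in (1/2)Z^l.  [halfpt y] is that actual point in Q^l. *)
Definition halfpt (l : nat) (y : 'rV[int]_l) : 'rV[rat]_l :=
  \row_i ((y 0 i)%:~R / 2).

Definition emb (l : nat) (x : 'rV[int]_l) : 'rV[int]_l := x *+ 2.

(* ||v|| <= T for the Euclidean norm, written as ||v||^2 <= T^2 (T >= 0). *)
Definition norm_le (l : nat) (v : 'rV[int]_l) (T : nat) : Prop :=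
  \sum_(i < l) (v 0 i) ^+ 2 <= (T%:Z) ^+ 2.

Definition Qhat (l T : nat) (q : 'rV[rat]_l) : Prop :=
  forall i : 'I_l, - (T%:R) <= q 0 i + 1/4 <= 2 * T%:R.

Definition translate (l : nat) (A : 'rV[rat]_l -> Prop) (v : 'rV[rat]_l)
  (q : 'rV[rat]_l) : Prop := A (q - v).

Definition perm_of_set (U : Type) (S : U -> Prop) (f : U -> U) : Prop :=
  (forall y, S y -> S (f y)) /\
  (forall y y', S y -> S y' -> f y = f y' -> y = y') /\
  (forall y, S y -> exists2 y', S y' & f y' = y).

Fixpoint comp_upto (U : Type) (sigma : nat -> U -> U) (n : nat) : U -> U :=
  match n with
  | 0 => id
  | n'.+1 => sigma n' \o comp_upto sigma n'
  end.

From HB Require Import structures.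
From mathcomp Require Import all_boot all_order all_algebra.
From mathcomp Require Import zify lra.
From Stdlib Require Import ClassicalEpsilon.
Import Order.TTheory GRing.Theory Num.Theory.
Local Open Scope ring_scope.
Set Implicit Arguments. Unset Strict Implicit.

(* Cut Z^l into cubes of side T (cells) and colour each cell by its
   coordinates mod 3, which gives 3^l colours.  Stage k first moves every
   point of a cell of colour k to a parking spot, a point of (1/2)Z^l with one
   half-integer coordinate in the same cell, and then moves the token of every
   x with phi x in a cell of colour k from its current spot to the vacated
   point phi x.  Since phi moves points by at most T, x and phi x lie in
   adjacent cells, so every exchange of stage k stays inside the union of the
   3^l cells around a single cell 3z + p_k of colour k; that union is
   Qhat + T(3z + p_k), and for fixed k these boxes are pairwise disjoint. *)

Lemma perm_of_set_involutive (U : Type) (S : U -> Prop) (g : U -> U) :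
  involutive g -> (forall y, S y -> S (g y)) -> perm_of_set S g.
Proof.
move=> gK gS; split; first exact: gS.
split; first by move=> y y' _ _ /(congr1 g); rewrite !gK.
by move=> y Sy; exists (g y); [exact: gS | exact: gK].
Qed.

Lemma perm_of_set_comp (U : Type) (S : U -> Prop) (f g : U -> U) :
  perm_of_set S f -> perm_of_set S g -> perm_of_set S (g \o f).
Proof.
move=> [fS [f_inj f_onto]] [gS [g_inj g_onto]].
split; first by move=> y Sy; apply/gS/fS.
split; first by move=> y y' Sy Sy' E; apply: f_inj => //; apply: g_inj => //; apply: fS.
move=> y Sy; have [y1 Sy1 <-] := g_onto y Sy; have [y2 Sy2 <-] := f_onto y1 Sy1.
by exists y2.
Qed.

Lemma comp_upto_id (U : Type) n (y : U) : comp_upto (fun _ => id) n y = y.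
Proof. by elim: n => //= n ->. Qed.

Section SwapPairs.
Variables (X U : Type) (P : pred X) (f g : X -> U).

Definition swap_pairs (y : U) : U :=
  match excluded_middle_informative (exists x, x \in P /\ f x = y) with
  | left h => g (proj1_sig (constructive_indefinite_description _ h))
  | right _ =>
    match excluded_middle_informative (exists x, x \in P /\ g x = y) with
    | left h => f (proj1_sig (constructive_indefinite_description _ h))
    | right _ => y
    end
  end.

Definition pairing :=
  [/\ {in P &, injective f}, {in P &, injective g}
    & {in P &, forall x x', f x <> g x'}].

Hypothesis fgP : pairing.

Let f_inj : {in P &, injective f}. Proof. by case: fgP. Qed.
Let g_inj : {in P &, injective g}. Proof. by case: fgP. Qed.
Let fg_disjoint : {in P &, forall x x', f x <> g x'}. Proof. by case: fgP. Qed.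

Lemma swap_pairs_f x : x \in P -> swap_pairs (f x) = g x.
Proof.
move=> Px; rewrite /swap_pairs; case: excluded_middle_informative => [h|[]].
  by case: constructive_indefinite_description => /= x' [Px' /(f_inj Px' Px) ->].
by exists x.
Qed.

Lemma swap_pairs_g x : x \in P -> swap_pairs (g x) = f x.
Proof.
move=> Px; rewrite /swap_pairs.
case: excluded_middle_informative => [[x' [Px' /(fg_disjoint Px' Px)]] //|_].
case: excluded_middle_informative => [h|[]].
  by case: constructive_indefinite_description => /= x' [Px' /(g_inj Px' Px) ->].
by exists x.
Qed.

Lemma swap_pairs_id y :
  {in P, forall x, f x <> y} -> {in P, forall x, g x <> y} -> swap_pairs y = y.
Proof.
move=> fy gy; rewrite /swap_pairs.
case: excluded_middle_informative => [h|_].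
  by exfalso; case: h => x [Px]; apply: fy.
case: excluded_middle_informative => [h|//].
by exfalso; case: h => x [Px]; apply: gy.
Qed.

Lemma swap_pairs_cases y :
  [\/ exists2 x, x \in P & f x = y, exists2 x, x \in P & g x = y
    | swap_pairs y = y].
Proof.
case: (classic (exists2 x, x \in P & f x = y)) => [|nf]; first by constructor 1.
case: (classic (exists2 x, x \in P & g x = y)) => [|ng]; first by constructor 2.
by constructor 3; apply: swap_pairs_id => x Px E; [apply: nf | apply: ng]; exists x.
Qed.

Lemma swap_pairs_involutive : involutive swap_pairs.
Proof.
move=> y; case: (swap_pairs_cases y) => [[x Px <-]|[x Px <-]|fix_y].
- by rewrite swap_pairs_f // swap_pairs_g.
- by rewrite swap_pairs_g // swap_pairs_f.
- by rewrite !fix_y.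
Qed.

Lemma perm_of_set_swap_pairs (S : U -> Prop) :
  {in P, forall x, S (f x) <-> S (g x)} -> perm_of_set S swap_pairs.
Proof.
move=> fgS; apply: perm_of_set_involutive; first exact: swap_pairs_involutive.
move=> y; case: (swap_pairs_cases y) => [[x Px <-]|[x Px <-]|->] //.
- by rewrite swap_pairs_f //; apply: (proj1 (fgS x Px)).
- by rewrite swap_pairs_g //; apply: (proj2 (fgS x Px)).
Qed.

End SwapPairs.

Lemma emb_coord (l : nat) (x : 'rV[int]_l) i : emb x 0 i = x 0 i * 2.
Proof. by rewrite mulmxnE -(mulr_natr (x 0 i)). Qed.

Lemma emb_inj (l : nat) : injective (@emb l).
Proof. by move=> x x' /rowP E; apply/rowP => i; have := E i; rewrite !emb_coord; lia. Qed.

Section Parking.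
Variables (l : nat) (i0 : 'I_l).

(* The parking spot x + e_i0 / 2, in the doubled encoding of (1/2)Z^l. *)
Definition park (x : 'rV[int]_l) : 'rV[int]_l := emb x + delta_mx 0 i0.

Lemma park_coord x i : park x 0 i = x 0 i * 2 + (i == i0)%:R.
Proof. by rewrite mxE emb_coord mxE. Qed.

Lemma park_inj : injective park.
Proof.
move=> x x' /rowP E; apply/rowP => i; have := E i.
by rewrite !park_coord; case: (i == i0); lia.
Qed.

Lemma emb_neq_park x x' : emb x <> park x'.
Proof. by move/rowP/(_ i0); rewrite emb_coord park_coord eqxx; lia. Qed.

End Parking.

Definition box (l T : nat) (p z y : 'rV[int]_l) : Prop :=
  translate (@Qhat l T)
    (map_mx (fun a : int => a%:~R : rat) ((z *+ 3 + p) *+ T)) (halfpt y).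

Lemma Qhat_coordE (T : nat) (y m : int) :
  (- (T%:R : rat) <= y%:~R / 2 - m%:~R + 1 / 4 <= 2 * (T%:R : rat)) <->
  (2 * m - 2 * T%:Z <= y < 2 * m + 4 * T%:Z).
Proof.
have lez_rat (a b : int) : (a <= b) = (a%:~R <= b%:~R :> rat) by rewrite ler_int.
have -> : T%:R = (T%:Z)%:~R :> rat by [].
split => [/andP[lo hi]|/andP[lo hi]].
- have lo' : - 4 * T%:Z <= 2 * y - 4 * m + 1.
    by rewrite lez_rat !(intrD, intrM, intrN, intrB) /=; lra.
  have hi' : 2 * y - 4 * m + 1 <= 8 * T%:Z.
    by rewrite lez_rat !(intrD, intrM, intrN, intrB) /=; lra.
  lia.
- have lo' : 2 * m - 2 * T%:Z <= y by [].
  have hi' : y <= 2 * m + 4 * T%:Z - 1 by lia.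
  move: lo' hi'; rewrite !lez_rat !(intrD, intrM, intrN, intrB) /= => lo' hi'.
  apply/andP; split; lra.
Qed.

Lemma box_coordE (l T : nat) (p z y : 'rV[int]_l) :
  box T p z y <-> forall i,
    2 * T%:Z * (z 0 i * 3 + p 0 i - 1) <= y 0 i < 2 * T%:Z * (z 0 i * 3 + p 0 i + 2).
Proof.
have centre i : ((z *+ 3 + p) *+ T) 0 i = (z 0 i * 3 + p 0 i) * T%:Z.
  by rewrite mulmxnE mxE mulmxnE -(mulr_natr (z 0 i)) -(mulr_natr (_ + _) T) (natz T).
rewrite /box /translate /Qhat; split => inbox i; move: (inbox i);
  rewrite !mxE centre Qhat_coordE; lia.
Qed.

Lemma box_park (l T : nat) (i0 : 'I_l) (p z x : 'rV[int]_l) :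
  box T p z (park i0 x) <-> box T p z (emb x).
Proof.
rewrite !box_coordE; split => inbox i; move: (inbox i);
  rewrite park_coord emb_coord; case: (i == i0); lia.
Qed.

Definition cell (l T : nat) (x : 'rV[int]_l) : 'rV[int]_l :=
  \row_i divz (x 0 i) T%:Z.

Lemma cell_bounds (l T : nat) (x : 'rV[int]_l) i : (0 < T)%N ->
  T%:Z * cell T x 0 i <= x 0 i < T%:Z * (cell T x 0 i + 1).
Proof.
move=> T_gt0; rewrite mxE.
have T_neq0 : T%:Z != 0 by lia.
have := lez_floor (x 0 i) T_neq0; have := ltz_ceil (x 0 i) (_ : 0 < T%:Z); lia.
Qed.

Lemma box_embE (l T : nat) (p z x : 'rV[int]_l) : (0 < T)%N ->
  box T p z (emb x) <->
  forall i, z 0 i * 3 + p 0 i - 1 <= cell T x 0 i <= z 0 i * 3 + p 0 i + 1.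
Proof.
move=> T_gt0; rewrite box_coordE; split => inbox i; move: (inbox i);
  have := cell_bounds x i T_gt0; rewrite emb_coord; nia.
Qed.

Lemma cell_near (l T : nat) (u v : 'rV[int]_l) i : (0 < T)%N ->
  `|u 0 i - v 0 i| <= T%:Z -> `|cell T u 0 i - cell T v 0 i| <= 1.
Proof. by move=> T_gt0; have := cell_bounds u i T_gt0; have := cell_bounds v i T_gt0; nia. Qed.

Lemma norm_le_coord (l T : nat) (v : 'rV[int]_l) i :
  norm_le v T -> `|v 0 i| <= T%:Z.
Proof.
rewrite /norm_le => sum_le.
have : v 0 i ^+ 2 <= \sum_(j < l) v 0 j ^+ 2.
  by rewrite (bigD1 i) //= lerDl sumr_ge0 // => j _; exact: sqr_ge0.
by move/le_trans/(_ sum_le); rewrite !expr2; nia.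
Qed.

Definition residue3 (l : nat) (c : 'rV[int]_l) : {ffun 'I_l -> 'I_3} :=
  [ffun i => inord (absz (modz (c 0 i) 3))].

Definition color (l : nat) (c : 'rV[int]_l) : nat :=
  index (residue3 c) (enum {ffun 'I_l -> 'I_3}).

Definition balanced3 (o : 'I_3) : int := if o == 2 :> nat then -1 else o%:Z.

(* The vector p_k of the statement: the residues mod 3, taken in {-1, 0, 1},
   of the cells of colour k. *)
Definition offset (l k : nat) : 'rV[int]_l :=
  \row_i balanced3 (nth [ffun => ord0] (enum {ffun 'I_l -> 'I_3}) k i).

Lemma color_lt (l : nat) (c : 'rV[int]_l) : (color c < 3 ^ l)%N.
Proof.
have -> : (3 ^ l = #|{ffun 'I_l -> 'I_3}|)%N by rewrite card_ffun !card_ord.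
by rewrite /color cardT index_mem mem_enum.
Qed.

Lemma offset_coord_in (l k : nat) i : offset l k 0 i \in [:: -1; 0; 1].
Proof.
rewrite mxE /balanced3.
by case: (nth [ffun=> ord0] (enum {ffun 'I_l -> 'I_3}) k i) => -[|[|[|]]].
Qed.

Lemma color_offset (l : nat) (c : 'rV[int]_l) i :
  exists w, c 0 i = w * 3 + offset l (color c) 0 i.
Proof.
rewrite mxE /color nth_index ?mem_enum // ffunE /balanced3.
have c_eq := divz_eq (c 0 i) 3.
have r_ge0 := modz_ge0 (c 0 i) (isT : (3 : int) != 0).
have r_lt3 := ltz_pmod (c 0 i) (isT : (0 : int) < 3).
move: (divz (c 0 i) 3) (modz (c 0 i) 3) c_eq r_ge0 r_lt3 => q r c_eq r_ge0 r_lt3.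
have [|[|]] : r = 0 \/ r = 1 \/ r = 2 by lia.
all: move=> r_val; subst r; rewrite inordK //=.
- by exists q; lia.
- by exists q; lia.
- by exists (q + 1); lia.
Qed.

Section Stages.
Variables (l T : nat) (i0 : 'I_l) (phi : 'rV[int]_l -> 'rV[int]_l).

Definition cell_color (x : 'rV[int]_l) : nat := color (cell T x).

Definition processed (k : nat) (x : 'rV[int]_l) : bool := (cell_color x < k)%N.

Definition home (k : nat) (x : 'rV[int]_l) : 'rV[int]_l :=
  if processed k x then park i0 x else emb x.

(* Spot of the token starting at [emb x] after the parking halves of the
   first [a] stages and the delivery halves of the first [b] stages. *)
Definition position (a b : nat) (x : 'rV[int]_l) : 'rV[int]_l :=
  if processed b (phi x) then emb (phi x) else home a x.

Definition parking (k : nat) : 'rV[int]_l -> 'rV[int]_l :=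
  swap_pairs [pred x | cell_color x == k] (@emb l) (park i0).

Definition delivery (k : nat) : 'rV[int]_l -> 'rV[int]_l :=
  swap_pairs [pred x | cell_color (phi x) == k] (home k.+1) (@emb l \o phi).

Definition stage (k : nat) : 'rV[int]_l -> 'rV[int]_l := delivery k \o parking k.

Lemma home_inj k : injective (home k).
Proof.
move=> x x'; rewrite /home; case: ifP => _; case: ifP => _.
- exact: park_inj.
- by move/esym/emb_neq_park.
- by move/emb_neq_park.
- exact: emb_inj.
Qed.

Lemma home_eq_emb k x u : home k x = emb u -> u = x /\ ~~ processed k x.
Proof.
by rewrite /home; case: ifP => [_ /esym/emb_neq_park // | _ /emb_inj ->].
Qed.

Lemma parking_pairing k :
  pairing [pred x | cell_color x == k] (@emb l) (park i0).
Proof. by split; apply: in2W; [exact: emb_inj | exact: park_inj | exact: emb_neq_park]. Qed.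

Hypothesis phi_inj : injective phi.

Lemma delivery_pairing k :
  pairing [pred x | cell_color (phi x) == k] (home k.+1) (@emb l \o phi).
Proof.
split; [exact: in2W (@home_inj k.+1) | exact: in2W (inj_comp (@emb_inj l) phi_inj) |].
move=> x x'; rewrite !inE => _ /eqP col_phi_x' /home_eq_emb[<-].
by rewrite /processed col_phi_x' ltnSn.
Qed.

Lemma stage_bij k : bijective (stage k).
Proof.
apply: bij_comp; apply: inv_bij; apply: swap_pairs_involutive;
  [exact: delivery_pairing | exact: parking_pairing].
Qed.

Lemma parking_position k x : parking k (position k k x) = position k.+1 k x.
Proof.
rewrite /position; case: ifP => [done_phi_x | _].
  apply: swap_pairs_id => x' /eqP col_x'; last by move/esym/emb_neq_park.
  by move/emb_inj => x'_eq; move: done_phi_x; rewrite /processed -x'_eq col_x' ltnn.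
rewrite /home /processed ltnS; case: ltngtP => col_x.
- apply: swap_pairs_id => x' /eqP col_x'; first by move/emb_neq_park.
  by move/park_inj => x'_eq; move: col_x; rewrite -x'_eq col_x' ltnn.
- apply: swap_pairs_id => x' /eqP col_x'; last by move/esym/emb_neq_park.
  by move/emb_inj => x'_eq; move: col_x; rewrite -x'_eq col_x' ltnn.
- by apply: swap_pairs_f; [exact: parking_pairing | rewrite inE col_x].
Qed.

Lemma delivery_position k x : delivery k (position k.+1 k x) = position k.+1 k.+1 x.
Proof.
rewrite /position /processed ltnS; case: ltngtP => col_phi_x.
- apply: swap_pairs_id => x' /eqP col_phi_x' /=.
    by move/home_eq_emb => [<-]; rewrite /processed ltnS ltnW.
  by move/emb_inj/phi_inj => x'_eq; move: col_phi_x; rewrite -x'_eq col_phi_x' ltnn.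
- apply: swap_pairs_id => x' /eqP col_phi_x' /=.
    by move/home_inj => x'_eq; move: col_phi_x; rewrite -x'_eq col_phi_x' ltnn.
  by move/esym/home_eq_emb => [<-]; rewrite /processed col_phi_x' ltnSn.
- by apply: swap_pairs_f; [exact: delivery_pairing | rewrite inE col_phi_x].
Qed.

Lemma stages_emb n x : comp_upto stage n (emb x) = position n n x.
Proof.
elim: n => [|n IH] /=; first by rewrite /position /home /processed !ltn0.
by rewrite IH /stage /= parking_position delivery_position.
Qed.

Lemma all_stages_emb x : comp_upto stage (3 ^ l) (emb x) = emb (phi x).
Proof. by rewrite stages_emb /position /processed color_lt. Qed.

Hypotheses (T_gt0 : (0 < T)%N) (phi_near : forall x, norm_le (phi x - x) T).

Lemma cell_phi_near x i : `|cell T (phi x) 0 i - cell T x 0 i| <= 1.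
Proof.
apply: cell_near => //; have := norm_le_coord i (phi_near x).
by rewrite 2!mxE.
Qed.

Lemma perm_of_set_stage k z : perm_of_set (box T (offset l k) z) (stage k).
Proof.
apply: perm_of_set_comp.
  apply: perm_of_set_swap_pairs; first exact: parking_pairing.
  by move=> x _; apply: iff_sym; exact: box_park.
apply: perm_of_set_swap_pairs; first exact: delivery_pairing.
move=> x; rewrite inE /cell_color => /eqP col_phi_x /=.
apply: (@iff_trans _ (box T (offset l k) z (emb x))).
  by rewrite /home; case: processed; first exact: box_park.
rewrite !box_embE //; split=> inbox i; move: (inbox i).
all: have [w] := color_offset (cell T (phi x)) i; rewrite col_phi_x.
all: have := cell_phi_near x i; lia.
Qed.

End Stages.

Theorem lemma5p2 (l T : nat) (phi : 'rV[int]_l -> 'rV[int]_l) :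
  bijective phi ->
  (forall x, norm_le (phi x - x) T) ->
  exists sigma : nat -> 'rV[int]_l -> 'rV[int]_l,
    (forall k, (k < 3 ^ l)%N -> bijective (sigma k)) /\
    (forall k, (k < 3 ^ l)%N ->
       exists p : 'rV[int]_l,
         (forall i, p 0 i \in [:: -1; 0; 1]) /\
         forall z : 'rV[int]_l,
           perm_of_set
             (fun y : 'rV[int]_l => translate (@Qhat l T)
                 (map_mx (fun a : int => a%:~R : rat) ((z *+ 3 + p) *+ T)) (halfpt y))
             (sigma k)) /\
    (forall x, comp_upto sigma (3 ^ l) (emb x) = emb (phi x)).
Proof.
move=> [psi phiK _] phi_near; have phi_inj := can_inj phiK.
have [phi_id | [T_gt0 l_gt0]] : (forall x, phi x = x) \/ (0 < T /\ 0 < l)%N.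
  have [T0 | T_gt0] := posnP T.
    left=> x; apply/rowP => i; have := norm_le_coord i (phi_near x).
    by rewrite T0 2!mxE normr_le0 subr_eq0 => /eqP.
  have [l0 | l_gt0] := posnP l; last by right.
  by left=> x; apply/rowP => i; move: (leq_trans (ltn_ord i) (eq_leq l0)).
- exists (fun _ => id); split; [|split] => [k _|k _|x].
  + by exists id.
  + exists 0; split=> [i|z]; first by rewrite mxE.
    exact: perm_of_set_involutive.
  + by rewrite comp_upto_id phi_id.
- exists (stage T (Ordinal l_gt0) phi); split; [|split] => [k _|k _|x].
  + exact: stage_bij.
  + exists (offset l k); split=> [i|z]; first exact: offset_coord_in.
    exact: perm_of_set_stage.
  + exact: all_stages_emb.
Qed.
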